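(* Let $(N,M,G,\rhd)$ be a lexicographic mixed instance, let $H\subseteq \bar C$ be a set of common chores, and let $B$ be a partial allocation of items of $M\setminus H$ that is Pareto optimal. Suppose that for every agent $i\in N$, every item of $H$ is $\rhd_i$-more important than every item of $G_i\cup B_i$. Then every (possibly partial) allocation $A$ obtained by extending $B$ by a serial dictatorship on the items of $H$, with an arbitrary ordering of agents and arbitrary quotas, is Pareto optimal.
   Context: A lexicographic mixed instance $(N,M,G,\rhd)$ consists of a set $N=[n]$ of agents, a finite set $M$ of items, for each agent $i$ a set $G_i\subseteq M$ of goods for $i$ (chores for $i$: $C_i=M\setminus G_i$), and for each $i$ a strict linear order $\rhd_i$ on $M$. Common chores: $\bar C=\bigcap_{i\in N}C_i$. For distinct $X,Y\subseteq M$, $X\succ_i Y$ iff the $\rhd_i$-most important item of $X\triangle Y$ lies in $(X\cap G_i)\cup(Y\cap C_i)$; $X\succeq_i Y$ means $X\succ_i Y$ or $X=Y$. A (partial) allocation is a tuple $(A_i)_{i\in N}$ of pairwise disjoint subsets of $M$. A partial allocation $A'$ Pareto dominates $A$ if $\bigcup_i A'_i=\bigcup_i A_i$, $A'_i\succeq_i A_i$ for all $i$, and $A'_i\succ_i A_i$ for some $i$; $A$ is Pareto optimal if no partial allocation Pareto dominates it. A serial dictatorship with ordering $\sigma=(\sigma_1,\dots,\sigma_n)$ of the agents and integer quotas $q=(q_1,\dots,q_n)$, started from a partial allocation, processes $\sigma_1,\sigma_2,\dots$ in turn; at agent $\sigma_t$'s step, if unallocated items (here: items of $H$) remain, $\sigma_t$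 adds to its bundle its $q_{\sigma_t}$ most preferred remaining items (the most important remaining goods for it, and then, if there are not enough goods, the least important remaining chores for it), or all remaining ones if fewer remain. *)

From mathcomp Require Import all_boot all_order.
Set Implicit Arguments. Unset Strict Implicit. Unset Printing Implicit Defensive.

(* Agents are 'I_n, items form a finite type M.
   G i : the goods of agent i (chores are the complement).
   imp i : rel M is agent i's importance order: imp i x y means x |>_i y. *)

Section Lex.
Variables (n : nat) (M : finType).
Variable G : 'I_n -> {set M}.
Variable imp : 'I_n -> rel M.

Definition strict_linear_order (r : rel M) : Prop :=
  [/\ irreflexive r, transitive r & forall x y, x != y -> r x y || r y x].

Definition symdiff (X Y : {set M}) : {set M} := (X :\: Y) :|: (Y :\: X).

Definition most_important (i : 'I_n) (S : {set M}) (x : M) : Prop :=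
  x \in S /\ forall y, y \in S -> y != x -> imp i x y.

Definition lex_pref (i : 'I_n) (X Y : {set M}) : Prop :=
  X != Y /\ exists x, most_important i (symdiff X Y) x /\
    ((x \in X /\ x \in G i) \/ (x \in Y /\ x \notin G i)).

Definition lex_wpref (i : 'I_n) (X Y : {set M}) : Prop :=
  lex_pref i X Y \/ X = Y.

Definition alloc := 'I_n -> {set M}.

Definition is_alloc (A : alloc) : Prop :=
  forall i j, i != j -> [disjoint A i & A j].

Definition allocated (A : alloc) : {set M} := \bigcup_(i < n) A i.

Definition pareto_dominates (A' A : alloc) : Prop :=
  allocated A' = allocated A /\ (forall i, lex_wpref i (A' i) (A i)) /\
  exists i, lex_pref i (A' i) (A i).

Definition pareto_optimal (A : alloc) : Prop :=
  is_alloc A /\ ~ exists A' : alloc, is_alloc A' /\ pareto_dominates A' A.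

Definition common_chores : {set M} := \bigcap_(i < n) ~: G i.

(* item x is preferred by agent i to item y as a single-item pick:
   goods before chores, goods by decreasing importance,
   chores by increasing importance. *)
Definition item_better (i : 'I_n) (x y : M) : bool :=
  if x \in G i then (y \notin G i) || imp i x y
  else (y \notin G i) && imp i y x.

Definition picks (i : 'I_n) (q : nat) (R S : {set M}) : Prop :=
  [/\ S \subset R, #|S| = minn q #|R| &
      forall x y, x \in S -> y \in R :\: S -> item_better i x y].

Definition remaining (H : {set M}) (A : alloc) : {set M} :=
  H :\: allocated A.

Inductive sd_run (H : {set M}) (q : 'I_n -> nat) :
    seq 'I_n -> alloc -> alloc -> Prop :=
| sd_nil A : sd_run H q [::] A A
| sd_cons i s A S A' :
    picks i (q i) (remaining H A) S ->
    sd_run H q s (fun j => if j == i then A j :|: S else A j) A' ->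
    sd_run H q (i :: s) A A'.

End Lex.

From mathcomp Require Import all_boot all_order.
Set Implicit Arguments. Unset Strict Implicit. Unset Printing Implicit Defensive.

(* Adding to agent i a set S of common chores that every agent ranks above all
   of its goods and all of its current items preserves Pareto optimality:
   another agent j cannot receive an item h of S in a dominating allocation,
   since the most important item where its bundles differ is either h itself
   (a new chore, so j is worse off) or an item of G_j or B_j, which ranks below
   h.  Hence all of S stays with i, and removing S from the dominating
   allocation would dominate B.  During the serial dictatorship each picker
   takes its least important remaining chores, so the remaining items of H keep
   ranking above everything an agent holds, and the argument iterates. *)

Section SetFacts.
Variable T : finType.
Implicit Types X Y Z : {set T}.

Lemma setUDKd X Z : [disjoint X & Z] -> (X :|: Z) :\: Z = X.
Proof. by move=> dXZ; rewrite setDUl setDv setU0; apply/setDidPl. Qed.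

Lemma setUr_inj_disjoint X Y Z : [disjoint X & Z] -> [disjoint Y & Z] ->
  X :|: Z = Y :|: Z -> X = Y.
Proof. by move=> dXZ dYZ eXY; rewrite -(setUDKd dXZ) eXY setUDKd. Qed.

Lemma symdiffUr X Y Z : [disjoint X & Z] -> [disjoint Y & Z] ->
  symdiff (X :|: Z) (Y :|: Z) = symdiff X Y.
Proof.
move=> dXZ dYZ; apply/setP => x; rewrite /symdiff !inE.
case xZ: (x \in Z); last by rewrite !orbF.
by rewrite (disjointFl dXZ xZ) (disjointFl dYZ xZ).
Qed.

Lemma disjoint_setDl X Y : [disjoint X :\: Y & Y].
Proof. by rewrite -setI_eq0 setIDAC setDIl setDv setI0. Qed.

Lemma symdiff_disjoint X Y Z : [disjoint X & Z] -> [disjoint Y & Z] ->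
  [disjoint symdiff X Y & Z].
Proof.
move=> dXZ dYZ; rewrite /symdiff -setI_eq0 setIUl setU_eq0 !setI_eq0.
by rewrite !(disjointWl (subsetDl _ _)).
Qed.

End SetFacts.

Section SerialDictatorship.
Variables (n : nat) (M : finType) (G : 'I_n -> {set M}) (imp : 'I_n -> rel M).
Hypothesis Himp : forall i, strict_linear_order (imp i).
Implicit Types (A B : alloc n M) (H R X Y S : {set M}) (x y : M).

Notation lex_pref := (lex_pref G imp).
Notation lex_wpref := (lex_wpref G imp).
Notation pareto_optimal := (pareto_optimal G imp).

Lemma imp_asym i x y : imp i x y -> imp i y x -> False.
Proof. by case: (Himp i) => irr trans _ /trans/[apply]; rewrite irr. Qed.

Lemma common_chores_subset S j : S \subset common_chores G -> S \subset ~: G j.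
Proof. by move/subset_trans; apply; apply: bigcap_inf. Qed.

Lemma lex_pref_setUr i X Y S : [disjoint X & S] -> [disjoint Y & S] ->
  lex_pref i (X :|: S) (Y :|: S) -> lex_pref i X Y.
Proof.
move=> dXS dYS [neXY [x [[xXY xmax] hx]]].
rewrite symdiffUr // in xXY xmax.
have xS : x \notin S by rewrite (disjointFr (symdiff_disjoint dXS dYS) xXY).
split; first by apply: contra neXY => /eqP ->.
by exists x; split=> //; move: hx; rewrite !inE (negbTE xS) !orbF.
Qed.

Lemma lex_wpref_setUr i X Y S : [disjoint X & S] -> [disjoint Y & S] ->
  lex_wpref i (X :|: S) (Y :|: S) -> lex_wpref i X Y.
Proof.
move=> dXS dYS [XYpref | eXY]; first by left; apply: lex_pref_setUr XYpref.
by right; apply: setUr_inj_disjoint eXY.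
Qed.

Lemma lex_wpref_disjoint_chores j X Y S : S \subset ~: G j ->
  [disjoint S & Y] -> (forall x y, x \in S -> y \in G j :|: Y -> imp j x y) ->
  lex_wpref j X Y -> [disjoint S & X].
Proof.
move=> Schores dSY Simp XYpref; rewrite -setI_eq0; apply/eqP/setP => h.
rewrite !inE; apply/negbTE/andP => -[hS hX].
have hY : h \notin Y by rewrite (disjointFr dSY hS).
have hG : h \notin G j by have := subsetP Schores h hS; rewrite inE.
case: XYpref => [[_ [x [[xXY xmax] hx]]] | eXY]; last by rewrite -eXY hX in hY.
have xGY : x \in G j :|: Y.
  by rewrite inE; case: hx => [[_ xG] | [xY _]]; rewrite ?xG ?xY ?orbT.
case: (eqVneq h x) => [ehx | nehx].
  by subst x; case: hx => [[_ hG'] | [hY' _]]; [rewrite hG' in hG | rewrite hY' in hY].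
have hXY : h \in symdiff X Y by rewrite /symdiff !inE hX hY.
exact: imp_asym (xmax h hXY nehx) (Simp h x hS xGY).
Qed.

Definition give A i S : alloc n M :=
  fun j => if j == i then A j :|: S else A j.

Lemma give_setU A i S j :
  give A i S j = A j :|: (if j == i then S else set0).
Proof. by rewrite /give; case: eqP; rewrite ?setU0. Qed.

Lemma allocated_give A i S : allocated (give A i S) = allocated A :|: S.
Proof.
apply/setP => x; rewrite inE; apply/bigcupP/orP => [[j _] | [/bigcupP[j _ xA] | xS]].
- rewrite give_setU inE => /orP[xA | ]; first by left; apply/bigcupP; exists j.
  by case: eqP; rewrite ?inE //; right.
- by exists j; rewrite // give_setU inE xA.
- by exists i; rewrite // give_setU eqxx inE xS orbT.
Qed.

Lemma disjoint_allocated A S j : [disjoint S & allocated A] -> [disjoint S & A j].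
Proof. by move/bigcup_disjointP; apply. Qed.

Lemma disjoint_give_part A S i j : [disjoint S & allocated A] ->
  [disjoint A j & (if j == i then S else set0)].
Proof.
case: eqP => _ dSA; last by rewrite -setI_eq0 setI0.
by rewrite disjoint_sym disjoint_allocated.
Qed.

Lemma is_alloc_give A i S :
  is_alloc A -> [disjoint S & allocated A] -> is_alloc (give A i S).
Proof.
move=> Aalloc dSA j k njk; rewrite /give.
have dSAl l : [disjoint S & A l] := disjoint_allocated l dSA.
case: ifP => [/eqP eji | _]; case: ifP => [/eqP eki | _].
- by rewrite eji eki eqxx in njk.
- by rewrite -setI_eq0 setIUl setU_eq0 !setI_eq0 dSAl andbT; apply: Aalloc.
- rewrite disjoint_sym -setI_eq0 setIUl setU_eq0 !setI_eq0 dSAl andbT.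
  by rewrite disjoint_sym; apply: Aalloc.
- exact: Aalloc.
Qed.

Lemma pareto_dominates_eq (A1 A2 B : alloc n M) : A1 =1 A2 ->
  pareto_dominates G imp A1 B -> pareto_dominates G imp A2 B.
Proof.
move=> eA [allocA1 [wprefA1 [i prefA1]]].
have allocA : allocated A1 = allocated A2 by apply: eq_bigr => j _; rewrite eA.
by split; last split; [rewrite -allocA | move=> j; rewrite -eA | exists i; rewrite -eA].
Qed.

Lemma pareto_dominates_give (A B : alloc n M) i S :
  [disjoint S & allocated A] -> [disjoint S & allocated B] ->
  pareto_dominates G imp (give A i S) (give B i S) -> pareto_dominates G imp A B.
Proof.
move=> dSA dSB [allocAB [wprefAB [i0 prefAB]]].
have dAS j := disjoint_give_part i j dSA.
have dBS j := disjoint_give_part i j dSB.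
split; last split.
- move: allocAB; rewrite !allocated_give.
  by apply: setUr_inj_disjoint; rewrite disjoint_sym.
- by move=> j; apply: lex_wpref_setUr (dAS j) (dBS j) _; rewrite -!give_setU.
- by exists i0; apply: lex_pref_setUr (dAS i0) (dBS i0) _; rewrite -!give_setU.
Qed.

Lemma pareto_optimal_give B i S :
  S \subset common_chores G -> [disjoint S & allocated B] ->
  (forall j x y, x \in S -> y \in G j :|: B j -> imp j x y) ->
  pareto_optimal B -> pareto_optimal (give B i S).
Proof.
move=> Schores dSB Simp [Balloc BPO]; split; first exact: is_alloc_give.
move=> [A [Aalloc domA]]; apply: BPO.
have dSA j : j != i -> [disjoint S & A j].
  move=> nji; case: domA => _ [wprefA _].
  apply: (lex_wpref_disjoint_chores (common_chores_subset j Schores) _ (Simp j)).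
    by rewrite disjoint_allocated.
  by have := wprefA j; rewrite /give (negbTE nji).
have SAi : S \subset A i.
  apply/subsetP => x xS.
  have : x \in allocated A by case: domA => -> _; rewrite allocated_give inE xS orbT.
  case/bigcupP => j _ xA; case: (eqVneq j i) => [<- // | nji].
  by rewrite (disjointFr (dSA j nji) xS) in xA.
pose B' : alloc n M := fun j => A j :\: S.
have dSB' : [disjoint S & allocated B'].
  by apply/bigcup_disjointP => j _; rewrite disjoint_sym disjoint_setDl.
exists B'; split.
  by move=> j k njk; apply: disjointW (subsetDl _ _) (subsetDl _ _) (Aalloc j k njk).
apply: (pareto_dominates_give (i := i) dSB' dSB).
apply: pareto_dominates_eq domA => j; rewrite /give /B'.
case: (eqVneq j i) => [-> | nji]; last by apply/esym/setDidPl; rewrite disjoint_sym dSA.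
by rewrite -{1}(setID (A i) S) (setIidPr SAi) setUC.
Qed.

Lemma picks_chores_least_important i q R S x y : R \subset ~: G i ->
  picks G imp i q R S -> x \in R :\: S -> y \in S -> imp i x y.
Proof.
move=> Rchores [SR _ Sbest] xRS yS.
have := Sbest y x yS xRS; rewrite /item_better.
by have := subsetP Rchores y (subsetP SR y yS); rewrite inE => /negbTE -> /andP[].
Qed.

Definition remaining_most_important H A : Prop :=
  forall j x y, x \in remaining H A -> y \in G j :|: A j -> imp j x y.

Lemma remaining_most_important_give H A i q S :
  H \subset common_chores G -> picks G imp i q (remaining H A) S ->
  remaining_most_important H A -> remaining_most_important H (give A i S).
Proof.
move=> Hchores pickS HA j x y; rewrite /remaining allocated_give -setDDl => xRS.
have xR : x \in remaining H A by move: xRS; rewrite inE => /andP[].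
rewrite /give; case: (eqVneq j i) => [-> | _]; last exact: HA.
rewrite setUA inE => /orP[yGA | yS]; first exact: HA.
apply: (picks_chores_least_important _ pickS) => //.
exact/common_chores_subset/(subset_trans (subsetDl _ _) Hchores).
Qed.

Lemma sd_run_pareto_optimal H q s A0 A :
  sd_run G imp H q s A0 A -> H \subset common_chores G ->
  pareto_optimal A0 -> remaining_most_important H A0 -> pareto_optimal A.
Proof.
elim=> {s A0 A} [// | i s A0 S A pickS _ IH] Hchores PO0 HA0.
have [SR _ _] := pickS.
apply: IH => //; last exact: remaining_most_important_give pickS HA0.
apply: pareto_optimal_give PO0.
- by apply: subset_trans SR _; apply: subset_trans (subsetDl _ _) Hchores.
- exact: disjointWl SR (disjoint_setDl _ _).
- by move=> j x y /(subsetP SR); apply: HA0.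
Qed.

End SerialDictatorship.

Theorem lemma1 (n : nat) (M : finType) (G : 'I_n -> {set M})
  (imp : 'I_n -> rel M)
  (Himp : forall i, strict_linear_order (imp i))
  (H : {set M}) (HC : H \subset common_chores G)
  (B : alloc n M)
  (HB : forall i, [disjoint B i & H])
  (HBpo : pareto_optimal G imp B)
  (Himportant : forall i x y, x \in H -> y \in G i :|: B i -> imp i x y)
  (sigma : seq 'I_n) (Hsigma : perm_eq sigma (enum 'I_n))
  (q : 'I_n -> nat) (A : alloc n M) :
  sd_run G imp H q sigma B A -> pareto_optimal G imp A.
Proof.
move=> runA; apply: (sd_run_pareto_optimal Himp runA HC HBpo).
by move=> j x y /(subsetP (subsetDl _ _)); apply: Himportant.
Qed.
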